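(* Let $G$ be a group with finite presentation $\mathcal P=\langle t,\mathcal A:\mathcal R,\ t^{-1}at=\phi(a)\ (a\in\mathcal A)\rangle$, $A=\langle\mathcal A\rangle\le G$, and $X$ its Cayley 2-complex. Let $C$ be a finite subcomplex of $X$, with $N(C)$ and $M(v,C)$ as in the context, and let $M(C)=\max\{M(v,C): v \text{ a vertex of } C\}$. Then every vertex $v\in C$ lies in $(t^{N(C)}At^{-N(C)})\,(t^{N(C)}\{1,t^{-1},\dots,t^{-M(C)}\})$. Moreover, for positive integers $M,N$ and any $w\in(t^NAt^{-N})(t^N\{1,t^{-1},\dots,t^{-M}\})$, we have $wA\subset(t^NAt^{-N})(t^N\{1,t^{-1},\dots,t^{-M}\})$.
   Context: $\mathcal A$ is finite, $\mathcal R\subset F(\mathcal A)$ finite, $\phi:F(\mathcal A)\to F(\mathcal A)$ a homomorphism. The Cayley 2-complex $X$ has vertex set $G$. For each vertex $v$ of $C$ write $v=t^{n(v)}a_vt^{-m(v)}$ with $a_v\in A$, $n(v),m(v)\ge0$; $N(C)=\max\{n(v):v\in C\}$ and $M(v,C)=N(C)-n(v)+m(v)$. Note $(t^NAt^{-N})(t^N\{1,\dots,t^{-M}\})=\{t^Nat^{-m}:a\in A,\ 0\le m\le M\}$. *)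

From mathcomp Require Import all_boot.
From Stdlib Require List.
Set Implicit Arguments. Unset Strict Implicit. Unset Printing Implicit Defensive.

Record group := Group {
  gcar :> Type;
  gmul : gcar -> gcar -> gcar;
  ginv : gcar -> gcar;
  gone : gcar;
  gmulA : forall x y z, gmul x (gmul y z) = gmul (gmul x y) z;
  gmul1 : forall x, gmul gone x = x;
  gmulV : forall x, gmul (ginv x) x = gone
}.

Fixpoint gpow (G : group) (x : G) (k : nat) : G :=
  if k is k'.+1 then gmul x (gpow x k') else gone G.

(* Words in the free group F(I): letters (i, b) with b = true meaning i^{-1}. *)
Definition word (I : Type) := seq (I * bool).

Definition eval_letter (I : Type) (G : group) (f : I -> G) (l : I * bool) : G :=
  if l.2 then ginv (f l.1) else f l.1.

Fixpoint eval (I : Type) (G : group) (f : I -> G) (w : word I) : G :=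
  if w is l :: w' then gmul (eval_letter f l) (eval f w') else gone G.

Definition winv (I : Type) (w : word I) : word I :=
  rev (map (fun l => (l.1, ~~ l.2)) w).

(* f : I -> G together with relators rels is a presentation of G:
   the relators hold, the generators generate G, and every relation
   holding in G is a consequence of rels (universal property of F(I)/<<rels>>). *)
Definition presents (I : Type) (G : group) (f : I -> G) (rels : seq (word I)) : Prop :=
  [/\ (forall r, List.In r rels -> eval f r = gone G),
      (forall g : G, exists w : word I, eval f w = g) &
      (forall (H : group) (h : I -> H),
          (forall r, List.In r rels -> eval h r = gone H) ->
          forall w1 w2 : word I, eval f w1 = eval f w2 -> eval h w1 = eval h w2)].

(* Generators t (None) and a (Some a), a in the alphabet cA. *)
Definition lift (cA : Type) (w : word cA) : word (option cA) :=
  map (fun l => (Some l.1, l.2)) w.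

(* relator  t^{-1} a t phi(a)^{-1}  ; phi : F(cA) -> F(cA) is the homomorphism
   determined by its values phi a on the generators. *)
Definition hnn_relator (cA : Type) (phi : cA -> word cA) (a : cA) : word (option cA) :=
  [:: (None, true); (Some a, false); (None, false)] ++ winv (lift (phi a)).

Definition hnn_relators (cA : finType) (R : seq (word cA)) (phi : cA -> word cA)
  : seq (word (option cA)) :=
  map (@lift cA) R ++ map (hnn_relator phi) (enum cA).

Definition in_A (cA : Type) (G : group) (iota : cA -> G) (x : G) : Prop :=
  exists w : word cA, eval iota w = x.

Definition in_prodset (cA : Type) (G : group) (iota : cA -> G) (t : G) (N M : nat)
  (w : G) : Prop :=
  exists x y : G,
    (exists a, in_A iota a /\ x = gmul (gpow t N) (gmul a (ginv (gpow t N)))) /\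
    (exists k, k <= M /\ y = gmul (gpow t N) (ginv (gpow t k))) /\
    w = gmul x y.

Definition gen_map (cA : Type) (G : group) (t : G) (iota : cA -> G) (i : option cA) : G :=
  if i is Some a then iota a else t.

From Pilot Require Import Defs.
From mathcomp Require Import all_boot.
From Stdlib Require List.

Set Implicit Arguments.
Unset Strict Implicit.
Unset Printing Implicit Defensive.

(* The relators t^-1 a t = phi(a) make A invariant under conjugation by t,
   hence by every t^k.  A vertex v = t^n a t^-m with n <= N is then rewritten as
   t^N (t^-d a t^d) t^-N . t^N t^-(d+m) with d = N - n, and a product
   t^N b t^-k . a is absorbed as t^N (b . t^-k a t^k) t^-N . t^N t^-k. *)

Section GroupFacts.
Variable G : group.
Local Notation "x * y" := (@gmul G x y).
Local Notation "x ^-1" := (@ginv G x).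
Local Notation "1" := (gone G).

Lemma gmulgV (x : G) : x * x^-1 = 1.
Proof.
rewrite -{1}(gmul1 (x * x^-1)) -{1}(gmulV (x^-1)) -!gmulA (gmulA (x^-1) x).
by rewrite gmulV gmul1 gmulV.
Qed.

Lemma gmulg1 (x : G) : x * 1 = x.
Proof. by rewrite -(gmulV x) gmulA gmulgV gmul1. Qed.

Lemma gmulKg (x y : G) : x^-1 * (x * y) = y.
Proof. by rewrite gmulA gmulV gmul1. Qed.

Lemma gmulKVg (x y : G) : x * (x^-1 * y) = y.
Proof. by rewrite gmulA gmulgV gmul1. Qed.

Lemma ginvg_uniq (x y : G) : x * y = 1 -> y = x^-1.
Proof. by move=> xy1; rewrite -(gmulKg x y) xy1 gmulg1. Qed.

Lemma ginvMg (x y : G) : (x * y)^-1 = y^-1 * x^-1.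
Proof. by symmetry; apply: ginvg_uniq; rewrite -gmulA gmulKVg gmulgV. Qed.

Lemma ginvgK (x : G) : (x^-1)^-1 = x.
Proof. by symmetry; apply: ginvg_uniq; apply: gmulV. Qed.

Lemma ginvg1 : 1^-1 = 1.
Proof. by symmetry; apply: ginvg_uniq; apply: gmul1. Qed.

Lemma gpowD (t : G) (a b : nat) : gpow t (a + b) = gpow t a * gpow t b.
Proof. by elim: a => [|a IHa] /=; rewrite ?gmul1 // IHa gmulA. Qed.

Lemma eval_cat (I : Type) (f : I -> G) (w1 w2 : word I) :
  eval f (w1 ++ w2) = eval f w1 * eval f w2.
Proof. by elim: w1 => [|l w IHw] /=; rewrite ?gmul1 // IHw gmulA. Qed.

Lemma eval_winv (I : Type) (f : I -> G) (w : word I) :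
  eval f (winv w) = (eval f w)^-1.
Proof.
elim: w => [|l w IHw] /=; first by rewrite ginvg1.
rewrite /winv map_cons rev_cons -cats1 eval_cat -/(winv w) IHw ginvMg /= gmulg1.
by congr (_ * _); rewrite /eval_letter /=; case: l.2; rewrite ?ginvgK.
Qed.

End GroupFacts.

Lemma eval_lift (cA : Type) (G : group) (t : G) (iota : cA -> G) (w : word cA) :
  eval (gen_map t iota) (Defs.lift w) = eval iota w.
Proof. by elim: w => [|l w IHw] //=; rewrite IHw. Qed.

Lemma In_mem (T : eqType) (x : T) (s : seq T) : x \in s -> List.In x s.
Proof.
elim: s => [|y s IHs] //=; rewrite in_cons => /orP [/eqP ->|xs]; first by left.
by right; apply: IHs.
Qed.

Lemma leq_bigmax_In (T : Type) (F : T -> nat) (s : seq T) (x : T) :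
  List.In x s -> F x <= \max_(y <- s) F y.
Proof.
elim: s => [|y s IHs] //= [->|xs]; rewrite big_cons; first exact: leq_maxl.
exact: leq_trans (IHs xs) (leq_maxr _ _).
Qed.

Lemma hnn_relator_conj (cA : finType) (R : seq (word cA)) (phi : cA -> word cA)
    (G : group) (t : G) (iota : cA -> G) :
  (forall r, List.In r (hnn_relators R phi) -> eval (gen_map t iota) r = gone G) ->
  forall a, gmul (ginv t) (gmul (iota a) t) = eval iota (phi a).
Proof.
move=> rels1 a.
have /rels1 : List.In (hnn_relator phi a) (hnn_relators R phi).
  by apply/List.in_or_app; right; apply/List.in_map/In_mem; rewrite mem_enum.
rewrite eval_cat eval_winv eval_lift /= /eval_letter /= gmulg1 !gmulA => rel.
by rewrite -[LHS]gmulg1 -(gmulV (eval iota (phi a))) gmulA rel gmul1.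
Qed.

Section ConjugationInvariantSubgroup.
Variables (cA : Type) (G : group) (iota : cA -> G) (t : G).
Local Notation "x * y" := (@gmul G x y).
Local Notation "x ^-1" := (@ginv G x).
Local Notation A := (in_A iota).

Lemma in_A1 : A (gone G).
Proof. by exists [::]. Qed.

Lemma in_A_mul (x y : G) : A x -> A y -> A (x * y).
Proof. by move=> [w1 <-] [w2 <-]; exists (w1 ++ w2); rewrite eval_cat. Qed.

Lemma in_A_inv (x : G) : A x -> A x^-1.
Proof. by move=> [w <-]; exists (winv w); rewrite eval_winv. Qed.

Hypothesis A_conj_gen : forall a, A (t^-1 * (iota a * t)).

Lemma in_A_conj (x : G) : A x -> A (t^-1 * (x * t)).
Proof.
move=> [w <-]; elim: w => [|l w IHw] /=; first by rewrite gmul1 gmulV; apply: in_A1.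
have -> : t^-1 * ((eval_letter iota l * eval iota w) * t) =
          (t^-1 * (eval_letter iota l * t)) * (t^-1 * (eval iota w * t)).
  by rewrite -!gmulA gmulKVg.
apply: in_A_mul IHw; rewrite /eval_letter; case: l.2; last exact: A_conj_gen.
have -> : t^-1 * ((iota l.1)^-1 * t) = (t^-1 * (iota l.1 * t))^-1.
  by rewrite !ginvMg ginvgK gmulA.
exact/in_A_inv/A_conj_gen.
Qed.

Lemma in_A_conj_pow (k : nat) (x : G) :
  A x -> A ((gpow t k)^-1 * (x * gpow t k)).
Proof.
elim: k x => [|k IHk] x Ax /=; first by rewrite ginvg1 gmul1 gmulg1.
rewrite ginvMg -!gmulA (gmulA t^-1) (gmulA (t^-1 * x)) -(gmulA t^-1).
exact/IHk/in_A_conj.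
Qed.

Lemma in_prodset_intro (N M k : nat) (b : G) :
  A b -> k <= M -> in_prodset iota t N M (gpow t N * (b * (gpow t k)^-1)).
Proof.
move=> Ab leM; exists (gpow t N * (b * (gpow t N)^-1)), (gpow t N * (gpow t k)^-1).
split; first by exists b.
split; first by exists k.
by rewrite -!gmulA gmulKg.
Qed.

Lemma in_prodset_normal_form (N M n m : nat) (a : G) :
  A a -> n <= N -> N - n + m <= M ->
  in_prodset iota t N M (gpow t n * (a * (gpow t m)^-1)).
Proof.
move=> Aa leN; rewrite addnC => leM; set d := N - n in leM *.
have -> : gpow t n * (a * (gpow t m)^-1) =
          gpow t N * (((gpow t d)^-1 * (a * gpow t d)) * (gpow t (m + d))^-1).
  rewrite -(subnKC leN) -/d !gpowD ginvMg -!gmulA gmulKVg.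
  by rewrite (gmulA (gpow t d)) gmulgV gmul1.
exact/in_prodset_intro/leM/in_A_conj_pow.
Qed.

Lemma in_prodset_mulA (N M : nat) (w a : G) :
  in_prodset iota t N M w -> A a -> in_prodset iota t N M (w * a).
Proof.
move=> [_ [_ [[b [Ab ->]] [[k [leM ->]] ->]]]] Aa.
have -> : (gpow t N * (b * (gpow t N)^-1)) * (gpow t N * (gpow t k)^-1) * a =
          gpow t N * ((b * ((gpow t k)^-1 * (a * gpow t k))) * (gpow t k)^-1).
  by rewrite -!gmulA gmulKg gmulgV gmulg1.
by apply: in_prodset_intro leM; apply/in_A_mul/in_A_conj_pow.
Qed.

End ConjugationInvariantSubgroup.

Theorem lemma5p3 (cA : finType) (R : seq (word cA)) (phi : cA -> word cA)
  (G : group) (t : G) (iota : cA -> G)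
  (HP : presents (gen_map t iota) (hnn_relators R phi))
  (V : seq G)                         (* vertex set of the finite subcomplex C *)
  (n m : G -> nat) (av : G -> G)      (* chosen decompositions v = t^n(v) a_v t^-m(v) *)
  (Hdec : forall v, List.In v V ->
      in_A iota (av v) /\
      v = gmul (gpow t (n v)) (gmul (av v) (ginv (gpow t (m v))))) :
  let NC := \max_(v <- V) n v in
  let MC := \max_(v <- V) (NC - n v + m v) in
  (forall v, List.In v V -> in_prodset iota t NC MC v) /\
  (forall M N : nat, 0 < M -> 0 < N ->
     forall w : G, in_prodset iota t N M w ->
     forall a : G, in_A iota a -> in_prodset iota t N M (gmul w a)).
Proof.
move=> NC MC; have [rels1 _ _] := HP.
have A_conj_gen a : in_A iota (gmul (ginv t) (gmul (iota a) t)).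
  by rewrite (hnn_relator_conj rels1); exists (phi a).
split=> [v Vv | M N _ _ w wP a Aa]; last exact: (in_prodset_mulA A_conj_gen wP Aa).
have [Aav ->] := Hdec v Vv.
apply: (in_prodset_normal_form A_conj_gen) => //; first exact: leq_bigmax_In.
exact: (leq_bigmax_In (fun x => NC - n x + m x)).
Qed.
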